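(* Let $n=2k$ with $k\ge 2$. Then $\{d_i : i=1,\ldots,n\}\cup\{a_{i'} : i'=1,\ldots,k\}$ is a strong resolving set of $S_n$.
   Context: For $n\ge 3$, $S_n$ is the graph with vertex set $\{a_i,b_i,c_i,d_i : 1\le i\le n\}$ and edge set $\{a_ia_{i+1}, b_ib_{i+1}, c_ic_{i+1}, d_id_{i+1}, a_{i+1}b_i, a_ib_i, b_ic_i, c_id_i : 1\le i\le n\}$, indices taken modulo $n$. $d$ is the graph distance. A vertex $w$ strongly resolves distinct vertices $u,v$ if $d(v,w)=d(v,u)+d(u,w)$ or $d(u,w)=d(u,v)+d(v,w)$. A set $S$ is a strong resolving set if every two distinct vertices are strongly resolved by some vertex of $S$. *)

From mathcomp Require Import all_boot.
Set Implicit Arguments. Unset Strict Implicit. Unset Printing Implicit Defensive.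

Section Dist.
Variables (T : finType) (adj : rel T).

Fixpoint ball (m : nat) (u : T) : {set T} :=
  match m with
  | 0 => [set u]
  | m'.+1 => ball m' u :|: [set y | [exists x in ball m' u, adj x y]]
  end.

(* graph distance: least m with v in ball m u (a shortest path length);
   any shortest path has length < #|T|; value #|T| if v unreachable. *)
Definition gdist (u v : T) : nat := find (fun m => v \in ball m u) (iota 0 #|T|).

Definition strongly_resolves (w u v : T) : bool :=
  (gdist v w == gdist v u + gdist u w) || (gdist u w == gdist u v + gdist v w).

Definition strong_resolving_set (S : {set T}) : Prop :=
  forall u v : T, u != v -> exists2 w, w \in S & strongly_resolves w u v.
End Dist.

(* Vertex (c, i) with c : 'I_4 encodes a_{i+1}, b_{i+1}, c_{i+1}, d_{i+1}
   for c = 0,1,2,3 respectively; i : 'I_n is the 0-based index. *)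
Definition Svert (n : nat) := ('I_4 * 'I_n)%type.

Definition Sedge0 (n : nat) (x y : Svert n) : bool :=
  [|| (x.1 == y.1) && (y.2 == (x.2 + 1) %% n :> nat)            (* a_ia_{i+1}, b_ib_{i+1}, c_ic_{i+1}, d_id_{i+1} *)
    , [&& x.1 == 0 :> nat, y.1 == 1 :> nat & x.2 == (y.2 + 1) %% n :> nat] (* a_{i+1} b_i *)
    , [&& x.1 == 0 :> nat, y.1 == 1 :> nat & x.2 == y.2]      (* a_i b_i *)
    , [&& x.1 == 1 :> nat, y.1 == 2 :> nat & x.2 == y.2]      (* b_i c_i *)
    | [&& x.1 == 2 :> nat, y.1 == 3 :> nat & x.2 == y.2] ].   (* c_i d_i *)

Definition Sadj (n : nat) : rel (Svert n) := fun x y => Sedge0 x y || Sedge0 y x.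

Definition Sset (n k : nat) : {set Svert n} :=
  [set x : Svert n | (x.1 == 3 :> nat) || ((x.1 == 0 :> nat) && (x.2 < k))].

From mathcomp Require Import all_boot ssrint zify.
Set Implicit Arguments. Unset Strict Implicit. Unset Printing Implicit Defensive.

(* Project S_n onto the 2n-cycle a_1 b_1 a_2 b_2 ... a_n b_n (the chords
   a_i a_{i+1} and b_i b_{i+1} join points two apart on it) and place c_i, d_i
   above b_i at heights 1 and 2.  The graph distance is then ceil(D/2) + |h - h'|,
   with D the cyclic distance of the projections and h, h' the heights: this
   function vanishes only on the diagonal, changes by at most one along an edge,
   and drops by one at some neighbour of every other vertex.  From the formula,
   the vertex d above u lies beyond u as seen from any vertex not higher than u;
   and since every point of an even cycle lies on a geodesic between two
   antipodes, a_j with j > k is resolved from any a_i by its antipode a_{j-k}. *)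

Section PotentialDistance.
Variables (T : finType) (adj : rel T) (u : T) (g : T -> nat).
Hypothesis g_eq0 : forall v, (g v == 0) = (v == u).
Hypothesis g_lipschitz : forall x y, adj x y -> g y <= (g x).+1.
Hypothesis g_descent : forall v, v != u -> exists2 w, adj w v & (g w).+1 = g v.

Lemma mem_ball_potential m v : (v \in ball adj m u) = (g v <= m).
Proof.
elim: m v => [|m IHm] v /=; first by rewrite in_set1 leqn0 g_eq0.
rewrite in_setU in_set IHm; apply/idP/idP.
- case/orP=> [/leqW // | /existsP[x /andP[]]].
  by rewrite IHm => gx /g_lipschitz; lia.
- rewrite leq_eqVlt ltnS => /orP[/eqP gv | -> //]; apply/orP; right.
  have /g_descent[w adj_wv gw] : v != u by rewrite -g_eq0 gv.
  by apply/existsP; exists w; rewrite IHm adj_wv andbT; lia.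
Qed.

Lemma find_leq_iota x a N : a <= x < a + N -> find (leq x) (iota a N) = x - a.
Proof.
elim: N a => [|N IHN] a x_in; first lia.
by rewrite /=; case: leqP => [|x_gt]; [lia | rewrite IHN; lia].
Qed.

Lemma gdist_potential v : g v < #|T| -> gdist adj u v = g v.
Proof.
move=> gv_lt; rewrite /gdist (eq_find (a2 := leq (g v))) => [|m].
  by rewrite find_leq_iota ?subn0.
exact: mem_ball_potential.
Qed.

End PotentialDistance.

Section CycleDistance.
Variable N : nat.

Definition cdist (p q : nat) : nat := minn `|p - q| (N - `|p - q|).

Lemma cdistxx p : cdist p p = 0.
Proof. rewrite /cdist; lia. Qed.

Lemma cdistC p q : cdist p q = cdist q p.
Proof. rewrite /cdist; lia. Qed.

Lemma cdist_eq0 p q : p < N -> q < N -> (cdist p q == 0) = (p == q).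
Proof. rewrite /cdist; lia. Qed.

Lemma leq_cdist_half p q : p < N -> q < N -> 2 * cdist p q <= N.
Proof. rewrite /cdist; lia. Qed.

Lemma leq_cdist_trans p q r : p < N -> q < N -> r < N ->
  cdist p r <= cdist p q + cdist q r.
Proof. rewrite /cdist; lia. Qed.

Lemma odd_cdist p q : ~~ odd N -> p < N -> q < N -> odd (cdist p q) = odd (p + q).
Proof. rewrite /cdist; lia. Qed.

Lemma addn_modE q s : q < N -> s <= N ->
  (q + s) %% N = if q + s < N then q + s else q + s - N.
Proof.
move=> q_lt s_le; case: ifP => [/modn_small // | /negbT]; rewrite -leqNgt => le_Nqs.
by rewrite -{1}(subnK le_Nqs) modnDr modn_small //; lia.
Qed.

(* The second alternative is the step from q to q - s, stated without subtraction modulo N. *)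
Lemma cdist_descent p q s : p < N -> q < N -> s <= cdist p q ->
  cdist p ((q + s) %% N) + s = cdist p q \/
  (forall r, r < N -> (r + s) %% N = q -> cdist p r + s = cdist p q).
Proof.
move=> p_lt q_lt s_le; have := leq_cdist_half p_lt q_lt => half.
have s_leN : s <= N by lia.
case: (ltnP p q) => [p_lt_q | q_le_p].
- case: (leqP (q - p) (N - (q - p))) => arc.
    by right=> r r_lt; rewrite addn_modE //; case: ifP => rs rq; move: s_le; rewrite /cdist; lia.
  by left; rewrite addn_modE //; case: ifP; move: s_le; rewrite /cdist; lia.
- case: (leqP (p - q) (N - (p - q))) => arc.
    by left; rewrite addn_modE //; case: ifP; move: s_le; rewrite /cdist; lia.
  by right=> r r_lt; rewrite addn_modE //; case: ifP => rs rq; move: s_le; rewrite /cdist; lia.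
Qed.

End CycleDistance.

Lemma cdist_antipode m p q : p < 2 * m -> q < 2 * m ->
  cdist (2 * m) p q + cdist (2 * m) q ((p + m) %% (2 * m)) = m.
Proof.
move=> p_lt q_lt; rewrite (addn_modE p_lt (leq_pmull _ _)) //.
by case: ifP; rewrite /cdist; lia.
Qed.

Lemma modn_double_add a e d : e < 2 -> (2 * a + e) %% (2 * d) = 2 * (a %% d) + e.
Proof.
case: (posnP d) => [-> | d_gt0] e_lt; first by rewrite !modn0.
rewrite {1}(divn_eq a d) mulnDr -addnA mulnCA modnMDl modn_small //.
by have := ltn_pmod a d_gt0; lia.
Qed.

Section SGraph.
Variable n : nat.
Implicit Types (c : 'I_4) (j : 'I_n) (u v w x y : Svert n).

Definition zpos x : nat := 2 * x.2 + (0 < x.1).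
Definition zheight x : nat := x.1.-1.

Definition Sdist x y : nat :=
  uphalf (cdist (2 * n) (zpos x) (zpos y)) + `|zheight x - zheight y|.

Lemma zpos_lt x : zpos x < 2 * n.
Proof. by rewrite /zpos; have := ltn_ord x.2; lia. Qed.

Lemma zpos_zheight_inj x y : zpos x = zpos y -> zheight x = zheight y -> x = y.
Proof.
case: x y => [c i] [c' j]; rewrite /zpos /zheight /= => epos eheight.
by congr pair; apply: val_inj => /=; lia.
Qed.

Lemma zpos_succ x y : y.2 = (x.2 + 1) %% n :> nat ->
  zpos y = (2 * x.2 + 2 + (0 < y.1)) %% (2 * n).
Proof. by rewrite /zpos => ->; rewrite -modn_double_add ?ltnS ?leq_b1 // mulnDr. Qed.

Lemma SadjC x y : Sadj x y = Sadj y x.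
Proof. exact: orbC. Qed.

Lemma Sedge0_step x y : Sedge0 x y ->
  cdist (2 * n) (zpos x) (zpos y) + 2 * `|zheight x - zheight y| <= 2.
Proof.
case: x y => [[c hc] [i hi]] [[c' hc'] [j hj]].
rewrite /Sedge0 /zpos /zheight /cdist -!val_eqE /= !addn_modE //; try lia.
by do 2 case: ifP; lia.
Qed.

Lemma Sadj_step x y : Sadj x y ->
  cdist (2 * n) (zpos x) (zpos y) + 2 * `|zheight x - zheight y| <= 2.
Proof. by case/orP=> /Sedge0_step; rewrite cdistC; lia. Qed.

Lemma Sdist_lipschitz u x y : Sadj x y -> Sdist u y <= (Sdist u x).+1.
Proof.
move=> /Sadj_step; have := leq_cdist_trans (zpos_lt u) (zpos_lt x) (zpos_lt y).
rewrite /Sdist; lia.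
Qed.

Lemma Sdist_eq0 u v : (Sdist u v == 0) = (v == u).
Proof.
apply/eqP/eqP => [|->]; last by rewrite /Sdist cdistxx; lia.
rewrite /Sdist => d0; apply: zpos_zheight_inj; last lia.
by apply/eqP; rewrite -(@cdist_eq0 (2 * n)) ?zpos_lt // cdistC; lia.
Qed.

Lemma odd_cdist_zpos x y :
  odd (cdist (2 * n) (zpos x) (zpos y)) = ((0 < x.1) != (0 < y.1)).
Proof. by rewrite odd_cdist ?zpos_lt ?mul2n ?odd_double // /zpos; lia. Qed.

Lemma Sdistxx u : Sdist u u = 0.
Proof. by apply/eqP; rewrite Sdist_eq0. Qed.

Lemma Sdist_lt_card u v : Sdist u v < #|{: Svert n}|.
Proof.
rewrite card_prod !card_ord /Sdist /zheight.
have := leq_cdist_half (zpos_lt u) (zpos_lt v).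
have := ltn_ord u.1; have := ltn_ord v.1; have := ltn_ord u.2; lia.
Qed.

Lemma ord_predS j : j = (ord_pred j + 1) %% n :> nat.
Proof. by rewrite addn1 -[in LHS](ord_predK j). Qed.

Lemma Sadj_up c j : 0 < c < 3 -> Sadj (c, j) (inord c.+1, j).
Proof.
case/andP=> c_gt0 c_lt3; apply/orP; left; rewrite /Sedge0 -!val_eqE /= inordK ?ltnS //.
by case: c c_gt0 c_lt3 => [[|[|[|]]] ?] //= _ _; rewrite !eqxx ?orbT.
Qed.

Lemma Sadj_down c j : 1 < c -> Sadj (inord c.-1, j) (c, j).
Proof.
move=> c_gt1; apply/orP; left; rewrite /Sedge0 -!val_eqE /= inordK ?(leq_ltn_trans (leq_pred c)) //.
by case: c c_gt1 => [[|[|[|[|]]]] ?] //= _; rewrite !eqxx ?orbT.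
Qed.

Lemma chord_neighbours v :
  (exists2 w, Sadj v w & zpos w = (zpos v + 2) %% (2 * n) /\ zheight w = zheight v) /\
  (exists2 w, Sadj v w & zpos v = (zpos w + 2) %% (2 * n) /\ zheight w = zheight v).
Proof.
case: v => c j; split.
- exists (c, ordS j); first by rewrite /Sadj /Sedge0 /= eqxx addn1 eqxx.
  by rewrite (@zpos_succ (c, j)) /= ?addn1 // /zpos addnAC.
- exists (c, ord_pred j); first by rewrite SadjC /Sadj /Sedge0 /= eqxx -ord_predS eqxx.
  by rewrite (@zpos_succ (c, ord_pred j)) /= -?ord_predS // /zpos addnAC.
Qed.

Lemma zigzag_neighbours v : v.1 <= 1 ->
  (exists2 w, Sadj v w & zpos w = (zpos v + 1) %% (2 * n) /\ zheight w = zheight v) /\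
  (exists2 w, Sadj v w & zpos v = (zpos w + 1) %% (2 * n) /\ zheight w = zheight v).
Proof.
case: v => c j /= c_le1; have := ltn_ord j.
have [c0 | c1] : c = 0 :> nat \/ c = 1 :> nat by lia.
- split.
    exists (inord 1, j).
      by apply/orP; left; rewrite /Sedge0 -!val_eqE /= inordK // c0 !eqxx /= ?orbT.
    by rewrite /zpos /zheight /= inordK // modn_small; lia.
  exists (inord 1, ord_pred j).
    by apply/orP; left; rewrite /Sedge0 -!val_eqE /= inordK // c0 -ord_predS !eqxx /= ?orbT.
  rewrite (@zpos_succ (inord 1, ord_pred j)) /= -?ord_predS // /zpos /zheight inordK //.
  by split; [congr (_ %% _) |] => /=; lia.
- split.
    exists (ord0, ordS j).
      by apply/orP; right; rewrite /Sedge0 -!val_eqE /= c1 !addn1 !eqxx /= ?orbT.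
    rewrite (@zpos_succ (c, j)) /= ?addn1 // /zpos /zheight /=.
    by split; [congr (_ %% _) |] => /=; lia.
  exists (ord0, j).
    by apply/orP; right; rewrite /Sedge0 -!val_eqE /= c1 !eqxx /= ?orbT.
  by rewrite modn_small /zpos /zheight /=; lia.
Qed.

Lemma cycle_descent u v s : s = 2 \/ s = 1 /\ v.1 <= 1 ->
  s <= cdist (2 * n) (zpos u) (zpos v) ->
  exists2 w, Sadj w v & cdist (2 * n) (zpos u) (zpos w) + s = cdist (2 * n) (zpos u) (zpos v)
                        /\ zheight w = zheight v.
Proof.
move=> s_ok s_le.
have [[wf vwf [posf hf]] [wb vwb [posb hb]]] :
  (exists2 w, Sadj v w & zpos w = (zpos v + s) %% (2 * n) /\ zheight w = zheight v) /\
  (exists2 w, Sadj v w & zpos v = (zpos w + s) %% (2 * n) /\ zheight w = zheight v).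
  by case: s_ok => [-> | [-> /zigzag_neighbours //]]; apply: chord_neighbours.
have [fwd | bwd] := cdist_descent (zpos_lt u) (zpos_lt v) s_le.
- by exists wf; rewrite 1?SadjC ?posf.
- by exists wb; rewrite 1?SadjC ?(bwd _ (zpos_lt wb)).
Qed.

Lemma Sdist_descent u v : v != u -> exists2 w, Sadj w v & (Sdist u w).+1 = Sdist u v.
Proof.
case: v => c j vu; have := ltn_ord u.1; have := ltn_ord c; rewrite /Sdist.
have [hu_lt | hv_le] := ltnP (zheight u) (zheight (c, j)) => lt_c lt_u1.
  have c_gt1 : 1 < c by move: hu_lt; rewrite /zheight /=; lia.
  exists (inord c.-1, j); first exact: Sadj_down.
  have -> : zpos (inord c.-1, j) = zpos (c, j) by rewrite /zpos /= inordK; lia.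
  by move: hu_lt; rewrite /zheight /= inordK; lia.
have [/andP[c_gt0 hv_lt] | not_up] := boolP ((0 < c) && (zheight (c, j) < zheight u)).
  have c_lt3 : c < 3 by move: hv_lt; rewrite /zheight /=; lia.
  exists (inord c.+1, j); first by rewrite SadjC Sadj_up ?c_gt0.
  have -> : zpos (inord c.+1, j) = zpos (c, j) by rewrite /zpos /= inordK; lia.
  by move: hv_lt; rewrite /zheight /= inordK; lia.
(* Otherwise move along the 2n-cycle: one step if the positions differ in
   parity, a chord otherwise. *)
have par := odd_cdist_zpos u (c, j).
have D_gt0 : 0 < cdist (2 * n) (zpos u) (zpos (c, j)).
  rewrite lt0n (@cdist_eq0 (2 * n)) ?zpos_lt //; apply: contra vu => /eqP pos_eq.
  apply/eqP/zpos_zheight_inj => //; move: pos_eq not_up hv_le; rewrite /zpos /zheight /=; lia.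
have [oddD | evenD] := boolP (odd (cdist (2 * n) (zpos u) (zpos (c, j)))).
- have c_le1 : c <= 1 by move: par oddD hv_le; rewrite /zheight /=; lia.
  have [w wv [Dw hw]] := cycle_descent (u := u) (v := (c, j)) (or_intror (conj erefl c_le1)) D_gt0.
  by exists w => //; rewrite hw; lia.
- have D_ge2 : 2 <= cdist (2 * n) (zpos u) (zpos (c, j)) by move: D_gt0 evenD; lia.
  have [w wv [Dw hw]] := cycle_descent (u := u) (or_introl erefl) D_ge2.
  by exists w => //; rewrite hw; lia.
Qed.

Theorem gdist_Sadj u v : gdist (@Sadj n) u v = Sdist u v.
Proof.
apply: (gdist_potential (g := Sdist u)) (Sdist_lt_card u v).
- exact: Sdist_eq0.
- exact: Sdist_lipschitz.
- exact: Sdist_descent.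
Qed.

Definition column_top x : Svert n := (ord_max, x.2).

Lemma Sdist_column_top u v : 0 < u.1 -> zheight v <= zheight u ->
  Sdist v (column_top u) = Sdist v u + Sdist u (column_top u).
Proof.
move=> u_gt0 hvu; have top_pos : zpos (column_top u) = zpos u by rewrite /zpos /=; lia.
rewrite /Sdist top_pos cdistxx; move: hvu; rewrite /zheight /=; have := ltn_ord u.1; lia.
Qed.

Lemma Sdist_antipode u v w : u.1 = 0 :> nat -> v.1 = 0 :> nat -> w.1 = 0 :> nat ->
  zpos w = (zpos v + n) %% (2 * n) -> Sdist v w = Sdist v u + Sdist u w.
Proof.
move=> u0 v0 w0 wE.
have vuw := cdist_antipode (zpos_lt v) (zpos_lt u); rewrite -wE in vuw.
have vw := cdist_antipode (zpos_lt v) (zpos_lt w); rewrite -wE cdistxx in vw.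
have := odd_cdist_zpos v u; have := odd_cdist_zpos u w.
by rewrite /Sdist /zheight; lia.
Qed.

End SGraph.

Theorem lemma3p12 (k : nat) (hk : 2 <= k) :
  strong_resolving_set (@Sadj (2 * k)) (Sset (2 * k) k).
Proof.
move=> [c i] [c' j] _; rewrite /strongly_resolves.
set u := (c, i); set v := (c', j).
have top_in x : column_top x \in Sset (2 * k) k by rewrite inE.
have [/andP[c_gt0 hvu] | not_u] := boolP ((0 < c) && (zheight v <= zheight u)).
  exists (column_top u); first exact: top_in.
  by rewrite !gdist_Sadj Sdist_column_top ?eqxx.
have [/andP[c'_gt0 huv] | not_v] := boolP ((0 < c') && (zheight u <= zheight v)).
  exists (column_top v); first exact: top_in.
  by rewrite !gdist_Sadj (@Sdist_column_top _ v u) ?eqxx ?orbT.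
have [c0 c'0] : c = 0 :> nat /\ c' = 0 :> nat by move: not_u not_v; rewrite /zheight /=; lia.
have [j_lt | j_ge] := ltnP j k.
  exists v; first by rewrite inE /= c'0 j_lt orbT.
  by rewrite !gdist_Sadj Sdistxx addn0 eqxx orbT.
have j_lt2k := ltn_ord j; have j'_lt : j - k < 2 * k by lia.
exists (c', Ordinal j'_lt); first by rewrite inE /= c'0; lia.
rewrite !gdist_Sadj (@Sdist_antipode _ u) ?eqxx //.
by rewrite (addn_modE (zpos_lt v) (leq_pmull _ _)) //; case: ifP; rewrite /zpos /=; lia.
Qed.
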